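(* Let $d\ge1$ be odd. In $\mathbb Q[l_1,l_2]$ (with $c_1=-(l_1+l_2)$, $c_2=l_1l_2$) the following identities hold: $$P_d=\Big(d^2c_2-\tfrac{d^2-1}{4}c_1^2\Big)P_{d-2},\quad R_{0,0}=\tfrac{d+1}{2}c_1\,P_{d-2},\quad R_{0,1}=-d\,P_{d-2},\quad R_{1,0}=d\,c_2\,P_{d-2},\quad R_{1,1}=\tfrac{1-d}{2}c_1\,P_{d-2}.$$
   Context: For $n\ge0$ let $P_{0,n}(X)=\prod_{j=0}^{n}\big(X+(n-j)l_1+jl_2\big)\in\mathbb Z[l_1,l_2][X]$, and set $P_{0,-1}:=1$. Put $c_1=-(l_1+l_2)$, $c_2=l_1l_2$, $P_d:=P_{0,d}\big(\tfrac{d+1}{2}c_1\big)$ and $P_{d-2}:=P_{0,d-2}\big(\tfrac{d-1}{2}c_1\big)$ (so $P_{-1}=1$). For $k=0,1$, divide $h^k\,P_{0,d-1}(H-h)\in\mathbb Z[l_1,l_2][H,h]$ by the monic polynomial $h^2-c_1h+c_2$ in $h$, obtaining the remainder $R_{k,0}(H)+R_{k,1}(H)\,h$ with $R_{k,j}(H)\in\mathbb Z[l_1,l_2][H]$; then define $R_{k,j}:=R_{k,j}\big(\tfrac{d+1}{2}c_1\big)$. *)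

From HB Require Import structures.
From mathcomp Require Import all_boot all_order all_algebra.
From mathcomp Require Import mpoly.
Set Implicit Arguments. Unset Strict Implicit. Unset Printing Implicit Defensive.
Import GRing.Theory.
Local Open Scope ring_scope.

Notation A := {mpoly rat[2]}.
Definition l1 : A := 'X_(@Ordinal 2 0 isT).
Definition l2 : A := 'X_(@Ordinal 2 1 isT).
Definition c1 : A := - (l1 + l2).
Definition c2 : A := l1 * l2.

Definition P0 (n : nat) : {poly A} :=
  \prod_(j < n.+1) ('X + ((n - j)%:R * l1 + j%:R * l2)%:P).

(* P0m m = P_{0,m-1}, with P_{0,-1} := 1. *)
Definition P0m (m : nat) : {poly A} := if m is m'.+1 then P0 m' else 1.

Definition Pd (d : nat) : A := (P0 d).[((d%:R + 1) / 2 : rat) *: c1].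
Definition Pdm2 (d : nat) : A := (P0m d.-1).[((d%:R - 1) / 2 : rat) *: c1].

(* The polynomial h^k P_{0,d-1}(H - h) in (A[H])[h]. *)
Definition HH : {poly {poly A}} := ('X : {poly A})%:P.
Definition hkP (k d : nat) : {poly {poly A}} :=
  'X ^+ k * (map_poly (fun a : A => a%:P%:P) (P0 d.-1)).[HH - 'X].
Definition divisor : {poly {poly A}} := 'X ^+ 2 - (c1%:P)%:P * 'X + (c2%:P)%:P.
(* remainder R_{k,0}(H) + R_{k,1}(H) h *)
Definition Rpoly (k d : nat) : {poly {poly A}} := hkP k d %% divisor.
Definition R (k j d : nat) : A := ((Rpoly k d)`_j).[((d%:R + 1) / 2 : rat) *: c1].

From HB Require Import structures.
From mathcomp Require Import all_boot all_order all_algebra.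
From mathcomp Require Import mpoly.
From mathcomp Require Import ring.
Import GRing.Theory.
Local Open Scope ring_scope.

(* Write d = 2m + 1 and x = (m + 1) c1.  The factors of P_{0,2m+1}(x) are
   affine in the index j, and its two extreme factors x + (2m+1) l1 and
   x + (2m+1) l2 multiply to d^2 c2 - (d^2 - 1)/4 c1^2, while the 2m middle
   factors are exactly those of P_{d-2}.  The same peeling of one extreme
   factor shows that h^k P_{0,2m}(x - h) takes at the two roots h = -l1, -l2
   of h^2 - c1 h + c2 = (h + l1)(h + l2) the values (-l_i)^k times
   (x + (2m+1) l_i) P_{d-2}.  A polynomial of degree < 2 in h is determined
   by its values at two distinct points, and the claimed remainders take
   these values. *)

Set Implicit Arguments.
Unset Strict Implicit.

Section LinearProduct.
Variables (R : comNzRingType) (a b : R).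

Definition lin_prod n (y : R) := \prod_(j < n.+1) (y + ((n - j)%:R * a + j%:R * b)).

Lemma horner_lin_prod n y :
  (\prod_(j < n.+1) ('X + ((n - j)%:R * a + j%:R * b)%:P)).[y] = lin_prod n y.
Proof.
by rewrite horner_prod; apply: eq_bigr => j _; rewrite hornerD hornerX hornerC.
Qed.

Lemma lin_prodSl n y : lin_prod n.+1 y = (y + n.+1%:R * a) * lin_prod n (y + b).
Proof.
rewrite /lin_prod big_ord_recl /= subn0 mul0r addr0; congr (_ * _).
by apply: eq_bigr => j _; rewrite /bump /= add1n subSS; ring.
Qed.

Lemma lin_prodSr n y : lin_prod n.+1 y = lin_prod n (y + a) * (y + n.+1%:R * b).
Proof.
rewrite /lin_prod big_ord_recr /= subnn mul0r add0r; congr (_ * _).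
by apply: eq_bigr => j _; rewrite subSn -1?ltnS //; ring.
Qed.

Variable m : nat.

Definition center := m.+1%:R * - (a + b).
Definition inner_prod := if m is m'.+1 then lin_prod m'.*2.+1 (m%:R * - (a + b)) else 1.
Definition end_factor_a := center + m.*2.+1%:R * a.
Definition end_factor_b := center + m.*2.+1%:R * b.

Lemma end_factorsM : end_factor_a * end_factor_b =
  m.*2.+1%:R ^+ 2 * (a * b) - (m * m.+1)%:R * (- (a + b)) ^+ 2.
Proof. by rewrite /end_factor_a /end_factor_b /center -muln2; ring. Qed.

Lemma lin_prod_center_a : lin_prod m.*2 (center + a) = end_factor_a * inner_prod.
Proof.
rewrite /inner_prod /end_factor_a /center; case: m => [|k].
  by rewrite /lin_prod big_ord1 /= double0 subnn; ring.
by rewrite doubleS lin_prodSl; congr (_ * lin_prod _ _); rewrite -?muln2; ring.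
Qed.

Lemma lin_prod_center_b : lin_prod m.*2 (center + b) = inner_prod * end_factor_b.
Proof.
rewrite /inner_prod /end_factor_b /center; case: m => [|k].
  by rewrite /lin_prod big_ord1 /= double0 subnn; ring.
by rewrite doubleS lin_prodSr; congr (lin_prod _ _ * _); rewrite -?muln2; ring.
Qed.

Lemma lin_prod_center :
  lin_prod m.*2.+1 center = end_factor_a * inner_prod * end_factor_b.
Proof. by rewrite lin_prodSl lin_prod_center_b mulrA. Qed.

End LinearProduct.

Lemma line_through_two_points (R : idomainType) (u v r0 r1 s0 s1 : R) :
  u != v -> r0 + r1 * u = s0 + s1 * u -> r0 + r1 * v = s0 + s1 * v ->
  r0 = s0 /\ r1 = s1.
Proof.
move=> /negPf uv eu ev.
have e1 : r1 = s1.
  have : (r1 - s1) * (u - v) = 0.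
    have -> : (r1 - s1) * (u - v) =
        (r0 + r1 * u - (s0 + s1 * u)) - (r0 + r1 * v - (s0 + s1 * v)) by ring.
    by rewrite eu ev !subrr.
  by move/eqP; rewrite mulf_eq0 !subr_eq0 uv orbF => /eqP.
by split=> //; move: eu; rewrite e1 => /addIr.
Qed.

Section RemainderValues.
Variables (R : idomainType) (a b : R) (m : nat).
Hypothesis a_neq_b : a != b.

Let Q := inner_prod a b m.

Lemma remainder_values0 r0 r1 :
  r0 + r1 * - a = end_factor_a a b m * Q ->
  r0 + r1 * - b = Q * end_factor_b a b m ->
  r0 = center a b m * Q /\ r1 = - m.*2.+1%:R * Q.
Proof.
move=> ea eb; apply: (@line_through_two_points _ (- a) (- b)); rewrite ?eqr_opp //.
  by rewrite ea /end_factor_a /center -muln2; ring.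
by rewrite eb /end_factor_b /center -muln2; ring.
Qed.

Lemma remainder_values1 r0 r1 :
  r0 + r1 * - a = - a * (end_factor_a a b m * Q) ->
  r0 + r1 * - b = - b * (Q * end_factor_b a b m) ->
  r0 = m.*2.+1%:R * (a * b) * Q /\ r1 = m%:R * (a + b) * Q.
Proof.
move=> ea eb; apply: (@line_through_two_points _ (- a) (- b)); rewrite ?eqr_opp //.
  by rewrite ea /end_factor_a /center -muln2; ring.
by rewrite eb /end_factor_b /center -muln2; ring.
Qed.

End RemainderValues.

Lemma horner_modp_XaddC_mul (R : idomainType) (p : {poly {poly R}}) (a b x z : R) :
  (z + a) * (z + b) = 0 ->
  let r := p %% (('X + a%:P%:P) * ('X + b%:P%:P)) in
  (r`_0).[x] + (r`_1).[x] * z = (map_poly (horner_eval x) p).[z].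
Proof.
move=> zab; set D := ('X + _) * _; move=> r.
have monD : D \is monic by rewrite monicMl ?monicXaddC.
have sizeD : size D = 3%N.
  by rewrite size_monicM ?size_XaddC ?monicXaddC // monic_neq0 ?monicXaddC.
have D_z : (map_poly (horner_eval x) D).[z] = 0.
  by rewrite rmorphM !rmorphD /= !map_polyX !map_polyC /= !horner_evalE !hornerC
    hornerM !hornerD !hornerX !hornerC.
rewrite [p in RHS](Pdiv.IdomainMonic.divp_eq monD) rmorphD rmorphM /=.
rewrite hornerD hornerM D_z mulr0 add0r -/r.
have size_r : (size (map_poly (horner_eval x) r) <= 2)%N.
  apply: leq_trans (size_poly _ _) _.
  by have := ltn_modpN0 p (monic_neq0 monD); rewrite sizeD.
rewrite (horner_coef_wide _ size_r) !big_ord_recl big_ord0 /= !coef_map /=.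
by rewrite !horner_evalE expr0 mulr1 expr1 addr0.
Qed.

Unset Implicit Arguments.
Set Strict Implicit.

Lemma horner_P0 n y : (P0 n).[y] = lin_prod l1 l2 n y.
Proof. exact: horner_lin_prod. Qed.

Lemma l1_neq_l2 : l1 != l2.
Proof.
apply/eqP => /(congr1 (meval (fun i : 'I_2 => (i : nat)%:R : rat))).
by rewrite /l1 /l2 !mevalXU => /eqP; rewrite eq_sym oner_eq0.
Qed.

Lemma divisorE : divisor = ('X + (l1%:P)%:P) * ('X + (l2%:P)%:P).
Proof.
rewrite /divisor /c1 /c2 !rmorphN !rmorphD !rmorphM /=.
by move: (l1%:P%:P : {poly {poly A}}) (l2%:P%:P : {poly {poly A}}) => a b; ring.
Qed.

Lemma horner_map_hkP k d (x z : A) :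
  (map_poly (horner_eval x) (hkP k d)).[z] = z ^+ k * (P0 d.-1).[x - z].
Proof.
rewrite /hkP rmorphM /= hornerM map_polyXn hornerXn; congr (_ * _).
rewrite -horner_map /= -map_poly_comp.
have -> : map_poly (map_poly (horner_eval x) \o (fun a : A => a%:P%:P)) (P0 d.-1)
    = (P0 d.-1)^:P.
  by apply: eq_map_poly => a /=; rewrite map_polyC /= horner_evalE hornerC.
rewrite -/(comp_poly _ _) horner_comp /HH rmorphB /= map_polyC map_polyX /=.
by rewrite hornerD hornerN hornerC hornerX horner_evalE hornerX.
Qed.

Lemma scale_nat (n : nat) (c : A) : (n%:R : rat) *: c = n%:R * c.
Proof. by rewrite scaler_nat mulr_natl. Qed.

Section OddDegree.
Variable m : nat.
Let d := m.*2.+1.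

Lemma odd_eval_point : ((d%:R + 1) / 2 : rat) *: c1 = center l1 l2 m.
Proof.
rewrite (_ : (_ / 2 : rat) = m.+1%:R); last by rewrite /d -muln2; field.
by rewrite scale_nat.
Qed.

Lemma Pdm2_odd : Pdm2 d = inner_prod l1 l2 m.
Proof.
rewrite /Pdm2 /d /= (_ : (_ / 2 : rat) = m%:R); last by rewrite -muln2; field.
by rewrite scale_nat; case: m => [|k] /=; rewrite ?hornerC ?horner_P0.
Qed.

Lemma Pd_odd :
  Pd d = end_factor_a l1 l2 m * inner_prod l1 l2 m * end_factor_b l1 l2 m.
Proof. by rewrite /Pd odd_eval_point horner_P0 lin_prod_center. Qed.

Lemma R_at_root k z : (z + l1) * (z + l2) = 0 ->
  R k 0 d + R k 1 d * z = z ^+ k * lin_prod l1 l2 m.*2 (center l1 l2 m - z).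
Proof.
move=> zr; rewrite /R /Rpoly divisorE (horner_modp_XaddC_mul _ _ zr).
by rewrite horner_map_hkP odd_eval_point horner_P0.
Qed.

End OddDegree.

Theorem mainTheorem10 (d : nat) : odd d -> (0 < d)%N ->
  [/\ Pd d = ((d ^ 2)%:R * c2 - (((d ^ 2)%:R - 1) / 4 : rat) *: c1 ^+ 2) * Pdm2 d,
      R 0 0 d = (((d%:R + 1) / 2 : rat) *: c1) * Pdm2 d,
      R 0 1 d = - d%:R * Pdm2 d,
      R 1 0 d = d%:R * c2 * Pdm2 d
    & R 1 1 d = (((1 - d%:R) / 2 : rat) *: c1) * Pdm2 d].
Proof.
move=> odd_d _; have {odd_d} -> : d = (d./2).*2.+1.
  by rewrite -[LHS]odd_double_half odd_d add1n.
move: d./2 => m.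
have root1 : (- l1 + l1) * (- l1 + l2) = 0 by rewrite addNr mul0r.
have root2 : (- l2 + l1) * (- l2 + l2) = 0 by rewrite addNr mulr0.
have := R_at_root m 0 _ root2; have := R_at_root m 0 _ root1.
rewrite !opprK lin_prod_center_a lin_prod_center_b !expr0 !mul1r.
move=> /(remainder_values0 l1_neq_l2) /[apply] [[-> ->]].
have := R_at_root m 1 _ root2; have := R_at_root m 1 _ root1.
rewrite !opprK lin_prod_center_a lin_prod_center_b !expr1.
move=> /(remainder_values1 l1_neq_l2) /[apply] [[-> ->]].
rewrite Pd_odd Pdm2_odd odd_eval_point.
rewrite (_ : (1 - _ : rat) / 2 = - m%:R); last by rewrite -muln2; field.
rewrite (_ : ((_ ^ 2)%:R - 1) / 4 = (m * m.+1)%:R :> rat);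
  last by rewrite -muln2 natrX; field.
rewrite scaleNr !scale_nat natrX.
by split=> //; [rewrite mulrAC end_factorsM | rewrite mulrN opprK].
Qed.
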